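(* In the setting described in the context (with $L=[0,1]$), let $q\in\{1,\dots,n\}$ and assume there exists $A\subseteq\mathcal C$ with $|A|=n-q$ and $\nu_q(A)=0$. Define $\mu_*:2^{\mathcal C}\to[0,1]$ by $\mu_*(\mathcal C)=1$, $\mu_*(X)=\nu_q(X)$ if $n-q\le|X|<n$, and $\mu_*(X)=\min_{Y\supsetneq X,\ n-q\le|Y|<n}\nu_q(Y)$ if $|X|<n-q$. Then $\mu_*$ is a $q$-minitive capacity and $\max_{1\le k\le N}|S_{\mu_*}(x^{(k)})-\alpha^{(k)}|=\nabla_q$.
   Context: Let $\mathcal C=\{1,\dots,n\}$ and $L=[0,1]$. A capacity is a map $\mu:2^{\mathcal C}\to[0,1]$ with $\mu(\emptyset)=0$, $\mu(\mathcal C)=1$, monotone for inclusion; it is $q$-minitive if for all $X$ with $|X|<n-q$, $\mu(X)=\min_{Y\supsetneq X,\ |Y|\ge n-q}\mu(Y)$. Sugeno integral: $S_\mu(x)=\max_{A\subseteq\mathcal C}\min(\min_{i\in A}x_i,\mu(A))$ with $\min_{i\in\emptyset}x_i=1$. Training data: $N$ pairs $(x^{(k)},\alpha^{(k)})$, $x^{(k)}\in[0,1]^n$, $\alpha^{(k)}\in[0,1]$. For $A\subsetneq\mathcal C$, $\gamma_{k,A}=\max_{i\in\mathcal C\setminus A}x^{(k)}_i$. Write $t^+=\max(t,0)$. For $1\le i\le N$ and $A\subsetneq\mathcal C$ with $|A|\ge n-q$, let $\sigma_\epsilon(\alpha^{(i)},\gamma_{l,A},\alpha^{(l)})=\min\big(\tfrac{(\alpha^{(l)}-\alpha^{(i)})^+}{2},(\alpha^{(l)}-\gamma_{l,A})^+\big)$,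 $\nabla_{i,A}=\max\big((\gamma_{i,A}-\alpha^{(i)})^+,\max_{1\le l\le N}\sigma_\epsilon(\alpha^{(i)},\gamma_{l,A},\alpha^{(l)})\big)$, $\nabla_i=\min_{A\subsetneq\mathcal C,\ |A|\ge n-q}\nabla_{i,A}$, and $\nabla_q=\max_{1\le i\le N}\nabla_i$. For $A\subsetneq\mathcal C$ with $|A|\ge n-q$, $\nu_q(A)=\max_{1\le k\le N}\big(\gamma_{k,A}\,\epsilon\,\max(\alpha^{(k)}-\nabla_q,0)\big)$, where $a\,\epsilon\,b=b$ if $a<b$ and $a\,\epsilon\,b=0$ if $a\ge b$. *)

From HB Require Import structures.
From mathcomp Require Import all_boot all_order all_algebra.
Set Implicit Arguments. Unset Strict Implicit. Unset Printing Implicit Defensive.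
Import Order.TTheory GRing.Theory Num.Theory.
Local Open Scope ring_scope.

Section Defs.
Variable R : realFieldType.
Variables n N q : nat.
(* training data: x k i = x^{(k)}_i, alpha k = alpha^{(k)} *)
Variable x : 'I_N -> 'I_n -> R.
Variable alpha : 'I_N -> R.

Definition posp (t : R) : R := Num.max t 0.

Definition is_capacity (mu : {set 'I_n} -> R) : Prop :=
  mu set0 = 0 /\ mu setT = 1 /\ (forall X, 0 <= mu X <= 1) /\
  (forall X Y : {set 'I_n}, X \subset Y -> mu X <= mu Y).

(* q-minitivity; the min over the (nonempty, since it contains C) family uses
   identity 1, harmless since values are <= 1 and C belongs to the family *)
Definition q_minitive (mu : {set 'I_n} -> R) : Prop :=
  forall X : {set 'I_n}, (#|X| < n - q)%N ->
    mu X = \big[Num.min/1]_(Y : {set 'I_n} | (X \proper Y) && (n - q <= #|Y|)%N) mu Y.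

(* Sugeno integral, min over the empty set = 1 *)
Definition sugeno (mu : {set 'I_n} -> R) (y : 'I_n -> R) : R :=
  \big[Num.max/0]_(A : {set 'I_n}) Num.min (\big[Num.min/1]_(i in A) y i) (mu A).

Definition gamma (k : 'I_N) (A : {set 'I_n}) : R :=
  \big[Num.max/0]_(i in ~: A) x k i.

Definition sigma_eps (ai g al : R) : R :=
  Num.min (posp (al - ai) / 2) (posp (al - g)).

Definition nablaA (i : 'I_N) (A : {set 'I_n}) : R :=
  Num.max (posp (gamma i A - alpha i))
          (\big[Num.max/0]_(l : 'I_N) sigma_eps (alpha i) (gamma l A) (alpha l)).

Definition nabla_i (i : 'I_N) : R :=
  \big[Num.min/1]_(A : {set 'I_n} | (A != setT) && (n - q <= #|A|)%N) nablaA i A.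

Definition nabla_q : R := \big[Num.max/0]_(i : 'I_N) nabla_i i.

Definition eps_op (a b : R) : R := if a < b then b else 0.

Definition nu_q (A : {set 'I_n}) : R :=
  \big[Num.max/0]_(k : 'I_N) eps_op (gamma k A) (Num.max (alpha k - nabla_q) 0).

Definition mu_star (X : {set 'I_n}) : R :=
  if X == setT then 1
  else if (n - q <= #|X|)%N then nu_q X
  else \big[Num.min/1]_(Y : {set 'I_n} |
          [&& X \proper Y, (n - q <= #|Y|)%N & Y != setT]) nu_q Y.

End Defs.

(* Write d for nabla_q.  The capacity mu_* is at least alpha_k - d on any set
   outside of which x^(k) stays below alpha_k - d; on the level set
   {i | alpha_k - d <= x^(k)_i} this gives S(x^(k)) >= alpha_k - d.  A set A
   realising nabla_k bounds S(x^(k)) by max(gamma_{k,A}, nu_q(A)) <= alpha_k + d.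
   Conversely, let E be the largest error |S(x^(k)) - alpha_k|.  For each i,
   enlarge the strict upper level set of x^(i) at S(x^(i)) to a set A with
   |A| >= n - q and nu_q(A) <= S(x^(i)).  Then S(x^(l)) <= max(gamma_{l,A}, S(x^(i)))
   for every l, which forces nabla_{i,A} <= E, hence nabla_q <= E. *)

From HB Require Import structures.
From mathcomp Require Import all_boot all_order all_algebra.
From mathcomp Require Import lra zify.
Import Order.TTheory GRing.Theory Num.Theory.
Local Open Scope ring_scope.
Set Implicit Arguments. Unset Strict Implicit.

Section BigminWitness.
Local Open Scope order_scope.
Context {disp : Order.disp_t} {T : orderType disp} {I : finType}.
Implicit Types (P : pred I) (F : I -> T).

Lemma bigmin_leP (x0 m : T) P F : m < x0 ->
  reflect (exists2 i, P i & F i <= m) (\big[Order.min/x0]_(i | P i) F i <= m).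
Proof.
move=> m_lt_x0; apply: (iffP idP) => [le_m|[i Pi le_m]]; last exact: (bigmin_inf i).
apply/exists_inP; apply: contraLR le_m => /exists_inPn none.
by rewrite -ltNge; apply: lt_bigmin => // i Pi; rewrite ltNge none.
Qed.

End BigminWitness.

Section Sugeno.
Variables (R : realFieldType) (n : nat) (mu : {set 'I_n} -> R) (y : 'I_n -> R).

Lemma sugeno_ge0 : 0 <= sugeno mu y.
Proof. exact: bigmax_ge_id. Qed.

Lemma le_sugeno (A : {set 'I_n}) :
  Num.min (\big[Num.min/1]_(i in A) y i) (mu A) <= sugeno mu y.
Proof. exact: le_bigmax. Qed.

Lemma sugeno_le1 : (forall X, mu X <= 1) -> sugeno mu y <= 1.
Proof. by move=> mu_le1; apply: bigmax_le => // A _; rewrite ge_min mu_le1 orbT. Qed.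

Lemma sugeno_le_max (B : {set 'I_n}) :
  (forall X Y : {set 'I_n}, X \subset Y -> mu X <= mu Y) ->
  sugeno mu y <= Num.max (\big[Num.max/0]_(i in ~: B) y i) (mu B).
Proof.
move=> mu_mono; apply: bigmax_le => [|A _]; first by rewrite le_max bigmax_ge_id.
have [sAB|/subsetPn[j jA jB]] := boolP (A \subset B).
  by rewrite ge_min; apply/orP; right; rewrite le_max mu_mono ?orbT.
rewrite ge_min; apply/orP; left; apply: (bigmin_inf j) => //.
by rewrite le_max le_bigmax_cond // inE.
Qed.

End Sugeno.

Section Nabla.
Variables (R : realFieldType) (n N q : nat).
Variables (x : 'I_N -> 'I_n -> R) (alpha : 'I_N -> R).
Implicit Types A B : {set 'I_n}.

Lemma le_posp (u : R) : u <= posp u.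
Proof. by rewrite /posp le_max lexx. Qed.

Lemma gamma_ge0 k A : 0 <= gamma x k A.
Proof. exact: bigmax_ge_id. Qed.

Lemma subset_gamma k A B : A \subset B -> gamma x k B <= gamma x k A.
Proof.
move=> sAB; apply: bigmax_le => [|i]; first exact: gamma_ge0.
rewrite inE => iB; apply: le_bigmax_cond.
by rewrite inE (contra (subsetP sAB i)).
Qed.

Lemma nabla_q_ge0 : 0 <= nabla_q q x alpha.
Proof. exact: bigmax_ge_id. Qed.

Lemma nablaA_le_error (s : 'I_N -> R) i A E :
  (forall k, `|s k - alpha k| <= E) -> gamma x i A <= s i ->
  (forall l, s l <= Num.max (gamma x l A) (s i)) -> nablaA x alpha i A <= E.
Proof.
move=> err gamma_le s_le.
have E_ge0 : 0 <= E := le_trans (normr_ge0 _) (err i).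
have := err i; rewrite ler_norml => /andP[_ si_le].
rewrite /nablaA ge_max /posp ge_max E_ge0 andbT; apply/andP; split; first lra.
apply: bigmax_le => // l _; have := err l; rewrite ler_norml => /andP[sl_ge _].
rewrite /sigma_eps /posp ge_min !ge_max.
(* Either [s l <= s i], and then [alpha l - alpha i <= 2 E], or
   [s l <= gamma x l A], and then [alpha l - gamma x l A <= E]. *)
have := s_le l; rewrite le_max => /orP[] sl_le; last first.
  by apply/orP; left; rewrite ler_pdivrMr // ge_max; apply/andP; split; lra.
by apply/orP; right; rewrite E_ge0 andbT; lra.
Qed.

End Nabla.

Section MuStar.
Variables (R : realFieldType) (n N q : nat).
Variables (x : 'I_N -> 'I_n -> R) (alpha : 'I_N -> R).
Hypothesis q_range : (1 <= q <= n)%N.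
Hypothesis x01 : forall k i, 0 <= x k i <= 1.
Hypothesis alpha01 : forall k, 0 <= alpha k <= 1.
Hypothesis nu_vanishes : exists A : {set 'I_n}, #|A| = (n - q)%N /\ nu_q q x alpha A = 0.
Implicit Types A B X Y : {set 'I_n}.

Local Notation d := (nabla_q q x alpha).
Local Notation nu := (nu_q q x alpha).
Local Notation mu := (mu_star q x alpha).
Local Notation S k := (sugeno mu (x k)).

Lemma gamma_le1 k A : gamma x k A <= 1.
Proof. by apply: bigmax_le => // i _; case/andP: (x01 k i). Qed.

Lemma nu_ge0 A : 0 <= nu A.
Proof. exact: bigmax_ge_id. Qed.

Lemma nu_le1 A : nu A <= 1.
Proof.
apply: bigmax_le => // k _; rewrite /eps_op; case: ifP => // _.
by have := nabla_q_ge0 q x alpha; case/andP: (alpha01 k); rewrite ge_max ler01 andbT; lra.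
Qed.

Lemma threshold_le_nu k A : gamma x k A < alpha k - d -> alpha k - d <= nu A.
Proof.
move=> gamma_lt; apply: (bigmax_sup k) => //.
by rewrite /eps_op lt_max gamma_lt le_max lexx.
Qed.

Lemma nu_le A s : 0 <= s ->
  (forall k, gamma x k A < alpha k - d -> alpha k - d <= s) -> nu A <= s.
Proof.
move=> s_ge0 le_s; apply: bigmax_le => // k _; rewrite /eps_op.
case: ifP => // gamma_lt; have [t_le0|t_gt0] := leP (alpha k - d) 0.
  by move: gamma_lt; rewrite (max_r t_le0) ltNge gamma_ge0.
by move: gamma_lt; rewrite (max_l (ltW t_gt0)) => /le_s.
Qed.

Lemma nu_subset A B : A \subset B -> nu A <= nu B.
Proof.
move=> sAB; apply: nu_le => [|k gamma_lt]; first exact: nu_ge0.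
by apply: threshold_le_nu; apply: le_lt_trans gamma_lt; apply: subset_gamma.
Qed.

Lemma mu_setT : mu setT = 1.
Proof. by rewrite /mu_star eqxx. Qed.

Lemma mu_large X : X != setT -> (n - q <= #|X|)%N -> mu X = nu X.
Proof. by move=> XT cardX; rewrite /mu_star (negbTE XT) cardX. Qed.

Lemma mu_small X : (#|X| < n - q)%N ->
  mu X = \big[Num.min/1]_(Y : {set 'I_n} |
            [&& X \proper Y, (n - q <= #|Y|)%N & Y != setT]) nu Y.
Proof.
move=> cardX; rewrite /mu_star ifF; last first.
  by apply: contraTF cardX => /eqP->; rewrite cardsT card_ord -leqNgt leq_subr.
by rewrite leqNgt cardX.
Qed.

Lemma mu_ge0 X : 0 <= mu X.
Proof.
rewrite /mu_star; case: ifP => // _; case: ifP => _; first exact: nu_ge0.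
by apply: le_bigmin => // Y _; apply: nu_ge0.
Qed.

Lemma mu_le1 X : mu X <= 1.
Proof.
rewrite /mu_star; case: ifP => // _; case: ifP => _; first exact: nu_le1.
exact: bigmin_le_id.
Qed.

Lemma nu_le_mu X : nu X <= mu X.
Proof.
have [->|XT] := eqVneq X setT; first by rewrite mu_setT nu_le1.
have [cardX|cardX] := leqP (n - q) #|X|; first by rewrite mu_large.
rewrite mu_small //; apply: le_bigmin => [|Y /andP[pXY _]]; first exact: nu_le1.
exact/nu_subset/proper_sub.
Qed.

Lemma mu_le_nu_superset X Y : X \subset Y -> Y != setT -> (n - q <= #|Y|)%N ->
  mu X <= nu Y.
Proof.
move=> sXY YT cardY; have [cardX|cardX] := leqP (n - q) #|X|.
  by rewrite mu_large ?nu_subset //; apply: contraNneq YT => XT; rewrite -subTset -XT.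
rewrite mu_small //; apply: (bigmin_inf Y) => //; rewrite cardY YT !andbT.
by rewrite properEneq sXY andbT; apply: contraTneq cardX => ->; rewrite -leqNgt.
Qed.

Lemma mu_subset X Y : X \subset Y -> mu X <= mu Y.
Proof.
move=> sXY; have [->|YT] := eqVneq Y setT; first by rewrite mu_setT mu_le1.
have [cardY|cardY] := leqP (n - q) #|Y|.
  by rewrite (mu_large YT) ?mu_le_nu_superset.
rewrite [mu Y]mu_small //.
apply: le_bigmin => [|Z /and3P[pYZ cardZ ZT]]; first exact: mu_le1.
by apply: mu_le_nu_superset => //; apply: subset_trans sXY (proper_sub pYZ).
Qed.

Lemma mu_set0 : mu set0 = 0.
Proof.
have [A [cardA nuA0]] := nu_vanishes.
have AT : A != setT.
  by apply: contra_eqN cardA => /eqP->; rewrite cardsT card_ord; case/andP: q_range; lia.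
apply/le_anti; rewrite mu_ge0 andbT -nuA0 -(mu_large AT) ?cardA //.
exact/mu_subset/sub0set.
Qed.

Lemma mu_q_minitive : q_minitive q mu.
Proof.
move=> X cardX; apply/le_anti/andP; split.
  apply: le_bigmin => [|Y /andP[pXY cardY]]; first exact: mu_le1.
  have [->|YT] := eqVneq Y setT; first by rewrite mu_setT mu_le1.
  by rewrite (mu_large YT cardY) mu_le_nu_superset ?proper_sub.
rewrite mu_small //.
apply: le_bigmin => [|Y /and3P[pXY cardY YT]]; first exact: bigmin_le_id.
by rewrite -(mu_large YT cardY); apply: (bigmin_inf Y) => //; rewrite pXY cardY.
Qed.

Lemma mu_star_capacity : is_capacity mu.
Proof.
split; first exact: mu_set0.
split; first exact: mu_setT.
by split; [move=> X; rewrite mu_ge0 mu_le1 | exact: mu_subset].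
Qed.

Lemma threshold_le_mu k B : gamma x k B < alpha k - d -> alpha k - d <= mu B.
Proof. by move=> gamma_lt; apply: le_trans (threshold_le_nu gamma_lt) (nu_le_mu B). Qed.

Lemma mu_lt1_witness B : mu B < 1 ->
  exists2 Y : {set 'I_n}, B \subset Y & [/\ Y != setT, (n - q <= #|Y|)%N & nu Y <= mu B].
Proof.
move=> muB_lt1; have BT : B != setT.
  by apply: contraTneq muB_lt1 => ->; rewrite mu_setT ltxx.
have [cardB|cardB] := leqP (n - q) #|B|; first by exists B; rewrite ?mu_large.
have := lexx (mu B); rewrite {1}mu_small //.
case/(bigmin_leP _ _ muB_lt1) => Y /and3P[pBY cardY YT] nuY.
by exists Y; rewrite ?proper_sub.
Qed.

Lemma alpha_sub_nabla_le_sugeno k : alpha k - d <= S k.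
Proof.
set t := alpha k - d; have [t_le0|t_gt0] := leP t 0.
  exact: le_trans t_le0 (sugeno_ge0 _ _).
have t_le1 : t <= 1.
  by have := nabla_q_ge0 q x alpha; case/andP: (alpha01 k); rewrite /t; lra.
apply: le_trans (le_sugeno mu (x k) [set i | t <= x k i]).
rewrite le_min; apply/andP; split; first by apply: le_bigmin => // i; rewrite inE.
by apply: threshold_le_mu; apply: bigmax_lt => // i; rewrite !inE -ltNge.
Qed.

Lemma nu_le_nablaA k A : nablaA x alpha k A <= d -> nu A <= alpha k + d.
Proof.
rewrite /nablaA ge_max => /andP[_ /bigmax_leP[_ sigma_le]].
have := nabla_q_ge0 q x alpha; case/andP: (alpha01 k) => alpha_ge0 _ d_ge0.
apply: nu_le => [|l gamma_lt]; first lra.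
have := sigma_le l isT; rewrite /sigma_eps ge_min => /orP[] le_d.
  by have := le_posp (alpha l - alpha k); lra.
by have := le_posp (alpha l - gamma x l A); lra.
Qed.

Lemma sugeno_le_alpha_add_nabla k : S k <= alpha k + d.
Proof.
have d_ge0 := nabla_q_ge0 q x alpha; case/andP: (alpha01 k) => alpha_ge0 _.
have [d_ge1|d_lt1] := leP 1 d.
  by apply: le_trans (sugeno_le1 _ mu_le1) _; lra.
have /(bigmin_leP _ _ d_lt1)[A /andP[AT cardA] nablaA_le] : nabla_i q x alpha k <= d.
  exact: le_bigmax.
apply: le_trans (sugeno_le_max _ A mu_subset) _.
rewrite (mu_large AT cardA) ge_max nu_le_nablaA // andbT.
move: nablaA_le; rewrite /nablaA ge_max => /andP[gamma_le _].
by have := le_posp (gamma x k A - alpha k); rewrite /gamma; lra.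
Qed.

Lemma sugeno_error_le_nabla k : `|S k - alpha k| <= d.
Proof.
have := alpha_sub_nabla_le_sugeno k; have := sugeno_le_alpha_add_nabla k.
by rewrite ler_norml; lra.
Qed.

Lemma sugeno_level_set k : exists A : {set 'I_n}, [/\ A != setT, (n - q <= #|A|)%N,
  gamma x k A <= S k & forall l, S l <= Num.max (gamma x l A) (S k)].
Proof.
set s := S k.
suff [A [AT cardA gamma_le nu_le_s]] : exists A : {set 'I_n},
    [/\ A != setT, (n - q <= #|A|)%N, gamma x k A <= s & nu A <= s].
  exists A; split => // l; apply: le_trans (sugeno_le_max _ A mu_subset) _.
  by rewrite (mu_large AT cardA) le_max2.
have [s_ge1|s_lt1] := leP 1 s.
  have mu0_lt1 : mu set0 < 1 by rewrite mu_set0 ltr01.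
  have [Y _ [YT cardY nuY]] := mu_lt1_witness mu0_lt1.
  exists Y; split => //; first exact: le_trans (gamma_le1 _ _) s_ge1.
  by rewrite mu_set0 in nuY; apply: le_trans nuY (sugeno_ge0 _ _).
pose B := [set j | s < x k j].
have gammaB : gamma x k B <= s.
  by apply: bigmax_le => [|j]; rewrite ?sugeno_ge0 // !inE -leNgt.
have muB : mu B <= s.
  have min_gt : s < \big[Num.min/1]_(i in B) x k i.
    by apply: lt_bigmin => // i; rewrite inE.
  by have := le_sugeno mu (x k) B; rewrite -/s ge_min leNgt min_gt.
have [Y sBY [YT cardY nuY]] := mu_lt1_witness (le_lt_trans muB s_lt1).
exists Y; split => //; last exact: le_trans nuY muB.
exact: le_trans (subset_gamma x k sBY) gammaB.
Qed.

Lemma nabla_q_le_sugeno_error : d <= \big[Num.max/0]_k `|S k - alpha k|.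
Proof.
apply: bigmax_le => [|i _]; first exact: bigmax_ge_id.
have [A [AT cardA gamma_le S_le]] := sugeno_level_set i.
apply: (bigmin_inf A); first by rewrite AT cardA.
by apply: nablaA_le_error gamma_le S_le => k; apply: le_bigmax.
Qed.

Lemma sugeno_error_eq_nabla : \big[Num.max/0]_k `|S k - alpha k| = d.
Proof.
apply/le_anti; rewrite nabla_q_le_sugeno_error andbT.
by apply: bigmax_le => [|k _]; [exact: nabla_q_ge0 | exact: sugeno_error_le_nabla].
Qed.

End MuStar.

Theorem proposition4 (R : realFieldType) (n N q : nat)
  (x : 'I_N -> 'I_n -> R) (alpha : 'I_N -> R) :
  (0 < N)%N -> (1 <= q <= n)%N ->
  (forall k i, 0 <= x k i <= 1) -> (forall k, 0 <= alpha k <= 1) ->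
  (exists A : {set 'I_n}, #|A| = (n - q)%N /\ nu_q q x alpha A = 0) ->
  is_capacity (mu_star q x alpha) /\ q_minitive q (mu_star q x alpha) /\
  \big[Num.max/0]_(k : 'I_N) `|sugeno (mu_star q x alpha) (x k) - alpha k|
    = nabla_q q x alpha.
Proof.
move=> _ q_range x01 alpha01 nu_vanishes.
split; first exact: mu_star_capacity.
split; first exact: mu_q_minitive.
exact: sugeno_error_eq_nabla.
Qed.
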